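(* Let $n\geq 3$, $a>1$, $p,q\in\mathbb{R}$, and let $f_t(x)$, $x\in[1,a]$, solve $$\dot f=u''(x)\left(\frac{f''}{1+f'^2}+(n-1)\frac{xf'-f}{x^2+f^2}\right),\qquad f_t(1)=q,\ f_t(a)=p,$$ where $f_0$ satisfies the supercritical phase assumption $(n-1)\arctan\left(\frac{f_0}{x}\right)+\arctan(f_0')>(n-2)\frac{\pi}{2}$. Then there exists a uniform constant $C$ such that $f_t'(x)>-C$ for all $x\in[1,a]$ and all $t\geq 0$ for which the flow is defined.
   Context: This is the line bundle mean curvature flow on the blowup of $\mathbb{P}^n$ at a point under Calabi symmetry, written in the Legendre coordinate $x\in[1,a]$: $u''$ is the smooth function of $x$ coming from the Calabi-symmetric K\''ahler form $\omega=i\partial\bar\partial u$ in $a[H]-[E]$ (positive on $(1,a)$, vanishing at the endpoints), and $f$ encodes a Calabi-symmetric form $\alpha_t$ in $p[H]-q[E]$ whose eigenvalues relative to $\omega$ are $f/x$ (multiplicity $n-1$) and $f'$, so its angle is $\Theta=(n-1)\arctan(f/x)+\arctan(f')$. *)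

From Stdlib Require Import Reals Lra List.
From Coquelicot Require Import Coquelicot.
Open Scope R_scope.

Definition dx (g : R -> R -> R) : R -> R -> R :=
  fun t x => Derive (fun y => g t y) x.
Definition dt (g : R -> R -> R) : R -> R -> R :=
  fun t x => Derive (fun s => g s x) t.

Fixpoint iterD (l : list bool) (g : R -> R -> R) : R -> R -> R :=
  match l with
  | nil => g
  | b :: l' => (if b then dx else dt) (iterD l' g)
  end.

Definition smooth_on2 (S : R -> R -> Prop) (g : R -> R -> R) : Prop :=
  forall (l : list bool) (t x : R), S t x ->
    ex_derive (fun y => iterD l g t y) x /\
    ex_derive (fun s => iterD l g s x) t /\
    continuity_2d_pt (iterD l g) t x.

Definition smooth_on1 (lo hi : R) (h : R -> R) : Prop :=
  forall (k : nat) (x : R), lo <= x <= hi -> ex_derive_n h k x.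

Definition flow_dom (T : Rbar) (a : R) (t x : R) : Prop :=
  0 <= t /\ Rbar_lt (Finite t) T /\ 1 <= x <= a.

(* Right-hand side of the line bundle MCF in Legendre coordinate;
   U plays the role of u''. *)
Definition mcf_rhs (n : nat) (U : R -> R) (f : R -> R -> R) (t x : R) : R :=
  U x * ( Derive_n (f t) 2 x / (1 + (dx f t x) ^ 2)
          + (INR n - 1) * (x * dx f t x - f t x) / (x ^ 2 + (f t x) ^ 2) ).

Definition angle (n : nat) (f : R -> R -> R) (t x : R) : R :=
  (INR n - 1) * atan (f t x / x) + atan (dx f t x).

From Stdlib Require Import Reals Lra Lia Classical.
From Coquelicot Require Import Coquelicot.
Open Scope R_scope.

(* The flow reads f_t = u'' Theta_x, hence (f')_t = (u'' Theta_x)_x.  At a spatial minimum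
   of Theta this is nonnegative: inside (1,a) because Theta_x = 0 and Theta_xx >= 0, at an
   endpoint because u'' vanishes there while (u'')' and Theta_x have the same sign.  A
   first-touching-time argument therefore shows that min Theta never decreases, so
   Theta >= (n-2) pi/2 for all time.  The same argument bounds f <= M := max(0, p, q, max f_0):
   at an interior spatial maximum above M we have f' = 0 and f'' <= 0, hence f_t <= 0, whereas
   touching the barrier M + eps (1 + t) from below forces f_t >= eps.  Then
   (n-1) arctan(f/x) <= (n-1) arctan M < (n-1) pi/2, and the angle bound keeps arctan f' above
   the fixed angle -pi/2 + (n-1)(pi/2 - arctan M) > -pi/2. *)

(** * Derivatives at one-sided and interior minima *)

Lemma is_derive_neg_right (h : R -> R) x l : is_derive h x l -> l < 0 ->
  exists d, 0 < d /\ forall y, x < y < x + d -> h y < h x.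
Proof.
  intros Hd Hl. apply is_derive_Reals in Hd.
  destruct (Hd (- l)) as [d Hdd]; [lra|].
  exists d. split; [apply cond_pos|]. intros y Hy.
  specialize (Hdd (y - x) ltac:(lra) ltac:(rewrite Rabs_right; lra)).
  replace (x + (y - x)) with y in Hdd by ring.
  apply Rabs_def2 in Hdd.
  destruct (Rlt_or_le (h y) (h x)) as [|Hge]; [easy|].
  assert (0 <= (h y - h x) / (y - x)) by (apply Rdiv_le_0_compat; lra).
  lra.
Qed.

Lemma is_derive_reflect (h : R -> R) x l :
  is_derive h x l -> is_derive (fun y => h (- y)) (- x) (- l).
Proof.
  intros Hd. rewrite <- (Ropp_involutive x) in Hd.
  assert (Hopp : is_derive (fun y : R => - y) (- x) (-1)) by (auto_derive; [easy | ring]).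
  replace (- l) with (scal (-1) l) by (unfold scal; simpl; unfold mult; simpl; ring).
  exact (is_derive_comp h Ropp (- x) l (-1) Hd Hopp).
Qed.

Lemma is_derive_right_min_ge0 (h : R -> R) x l r : 0 < r -> is_derive h x l ->
  (forall y, x < y < x + r -> h x <= h y) -> 0 <= l.
Proof.
  intros Hr Hd Hmin. destruct (Rle_or_lt 0 l) as [|Hl]; [easy|].
  destruct (is_derive_neg_right h x l Hd Hl) as [d [Hd0 Hdec]].
  assert (0 < Rmin d r) by (apply Rmin_case; lra).
  assert (Rmin d r <= d) by apply Rmin_l.
  assert (Rmin d r <= r) by apply Rmin_r.
  specialize (Hdec (x + Rmin d r / 2) ltac:(lra)).
  specialize (Hmin (x + Rmin d r / 2) ltac:(lra)). lra.
Qed.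

Lemma is_derive_left_min_le0 (h : R -> R) x l r : 0 < r -> is_derive h x l ->
  (forall y, x - r < y < x -> h x <= h y) -> l <= 0.
Proof.
  intros Hr Hd Hmin.
  enough (0 <= - l) by lra.
  apply (is_derive_right_min_ge0 _ (- x) _ r Hr (is_derive_reflect h x l Hd)).
  intros y Hy. rewrite Ropp_involutive. apply Hmin. lra.
Qed.

Lemma is_derive_local_min_eq0 (h : R -> R) x l r : 0 < r -> is_derive h x l ->
  (forall y, Rabs (y - x) < r -> h x <= h y) -> l = 0.
Proof.
  intros Hr Hd Hmin.
  assert (0 <= l).
  { apply (is_derive_right_min_ge0 h x l r Hr Hd).
    intros y Hy. apply Hmin. rewrite Rabs_right; lra. }
  assert (l <= 0).
  { apply (is_derive_left_min_le0 h x l r Hr Hd).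
    intros y Hy. apply Hmin. rewrite Rabs_left; lra. }
  lra.
Qed.

Lemma is_derive2_local_min_ge0 (h h' : R -> R) x l2 r : 0 < r ->
  (forall y, Rabs (y - x) < r -> is_derive h y (h' y)) -> is_derive h' x l2 ->
  (forall y, Rabs (y - x) < r -> h x <= h y) -> 0 <= l2.
Proof.
  intros Hr Hd Hd2 Hmin. destruct (Rle_or_lt 0 l2) as [|Hl]; [easy|].
  assert (Hcrit : h' x = 0).
  { apply (is_derive_local_min_eq0 h x _ r Hr); [|exact Hmin].
    apply Hd. rewrite Rminus_diag, Rabs_R0. exact Hr. }
  destruct (is_derive_neg_right h' x l2 Hd2 Hl) as [d [Hd0 Hdec]].
  set (y := x + Rmin d r / 2).
  assert (0 < Rmin d r) by (apply Rmin_case; lra).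
  assert (Rmin d r <= d) by apply Rmin_l.
  assert (Rmin d r <= r) by apply Rmin_r.
  destruct (MVT_cor2 h h' x y) as [c [Hc Hcxy]]; [unfold y; lra| |].
  { intros c Hc. apply is_derive_Reals, Hd. apply Rabs_def1; unfold y in *; lra. }
  assert (h' c < 0) by (rewrite <- Hcrit; apply Hdec; unfold y in *; lra).
  assert (h' c * (y - x) < 0) by (apply Rmult_neg_pos; unfold y in *; lra).
  assert (h x <= h y) by (apply Hmin; unfold y; rewrite Rabs_right; lra).
  lra.
Qed.

Lemma is_derive_eq_on_interval (g k : R -> R) lo hi x l1 l2 : lo < hi -> lo <= x <= hi ->
  (forall y, lo <= y <= hi -> g y = k y) ->
  is_derive g x l1 -> is_derive k x l2 -> l1 = l2.
Proof.
  intros Hlh Hx Hgk Hg Hk.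
  assert (Hd1 : is_derive (fun y => g y - k y) x (l1 - l2))
    by exact (is_derive_minus g k x l1 l2 Hg Hk).
  assert (Hd2 : is_derive (fun y => k y - g y) x (l2 - l1))
    by exact (is_derive_minus k g x l2 l1 Hk Hg).
  assert (Hzero : forall y, lo <= y <= hi -> g y - k y = 0 /\ k y - g y = 0).
  { intros y Hy. rewrite Hgk by exact Hy. lra. }
  destruct (Rlt_or_le x hi) as [Hxhi|Hxhi].
  - assert (0 <= l1 - l2).
    { apply (is_derive_right_min_ge0 _ x _ (hi - x) ltac:(lra) Hd1).
      intros y Hy. rewrite (proj1 (Hzero x Hx)), (proj1 (Hzero y ltac:(lra))). lra. }
    assert (0 <= l2 - l1).
    { apply (is_derive_right_min_ge0 _ x _ (hi - x) ltac:(lra) Hd2).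
      intros y Hy. rewrite (proj2 (Hzero x Hx)), (proj2 (Hzero y ltac:(lra))). lra. }
    lra.
  - assert (l1 - l2 <= 0).
    { apply (is_derive_left_min_le0 _ x _ (hi - lo) ltac:(lra) Hd1).
      intros y Hy. rewrite (proj1 (Hzero x Hx)), (proj1 (Hzero y ltac:(lra))). lra. }
    assert (l2 - l1 <= 0).
    { apply (is_derive_left_min_le0 _ x _ (hi - lo) ltac:(lra) Hd2).
      intros y Hy. rewrite (proj2 (Hzero x Hx)), (proj2 (Hzero y ltac:(lra))). lra. }
    lra.
Qed.

Lemma weighted_derivative_at_min (u th th' : R -> R) lo hi x u' th'' :
  lo < hi -> lo <= x <= hi ->
  (forall y, lo < y < hi -> 0 < u y) -> u lo = 0 -> u hi = 0 ->
  (forall y, lo <= y <= hi -> is_derive th y (th' y)) ->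
  is_derive th' x th'' -> is_derive u x u' ->
  (forall y, lo <= y <= hi -> th x <= th y) ->
  u x * th' x = 0 /\ 0 <= u' * th' x + u x * th''.
Proof.
  intros Hlh Hx Hu Hulo Huhi Dth Dth' Du Hmin.
  destruct Hx as [[Hlo | <-] [Hhi | ->]].
  - set (r := Rmin (x - lo) (hi - x)).
    assert (Hr : 0 < r) by (unfold r; apply Rmin_case; lra).
    assert (r <= x - lo) by apply Rmin_l.
    assert (r <= hi - x) by apply Rmin_r.
    assert (Hin : forall y, Rabs (y - x) < r -> lo <= y <= hi)
      by (intros y Hy; apply Rabs_def2 in Hy; lra).
    assert (Hcrit : th' x = 0).
    { apply (is_derive_local_min_eq0 th x _ r Hr); [apply Dth; lra|].
      intros y Hy. apply Hmin, Hin, Hy. }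
    assert (0 <= th'').
    { apply (is_derive2_local_min_ge0 th th' x th'' r Hr); [| exact Dth' |].
      - intros y Hy. apply Dth, Hin, Hy.
      - intros y Hy. apply Hmin, Hin, Hy. }
    specialize (Hu x ltac:(lra)). rewrite Hcrit. split; [ring|]. nra.
  - rewrite Huhi. split; [ring|].
    assert (th' hi <= 0).
    { apply (is_derive_left_min_le0 th hi _ (hi - lo)); [lra | apply Dth; lra |].
      intros y Hy. apply Hmin. lra. }
    assert (u' <= 0).
    { apply (is_derive_left_min_le0 u hi _ (hi - lo)); [lra | exact Du |].
      intros y Hy. rewrite Huhi. left. apply Hu. lra. }
    nra.
  - rewrite Hulo. split; [ring|].
    assert (0 <= th' lo).
    { apply (is_derive_right_min_ge0 th lo _ (hi - lo)); [lra | apply Dth; lra |].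
      intros y Hy. apply Hmin. lra. }
    assert (0 <= u').
    { apply (is_derive_right_min_ge0 u lo _ (hi - lo)); [lra | exact Du |].
      intros y Hy. rewrite Hulo. left. apply Hu. lra. }
    nra.
  - lra.
Qed.

Lemma ex_derive_continuity_pt (g : R -> R) x : ex_derive g x -> continuity_pt g x.
Proof.
  intros Hd. apply continuity_pt_filterlim.
  apply (ex_derive_continuous (K := R_AbsRing) (V := R_NormedModule)), Hd.
Qed.

Lemma continuity_2d_pt_slice (g : R -> R -> R) t x :
  continuity_2d_pt g t x -> continuity_pt (fun y => g t y) x.
Proof.
  intros H eps Heps. destruct (H (mkposreal eps Heps)) as [d Hd].
  exists d. split; [apply cond_pos|]. intros y [_ Hy]. simpl in *.
  unfold R_dist in *. apply Hd; [|exact Hy].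
  rewrite Rminus_diag, Rabs_R0. apply cond_pos.
Qed.

Lemma segment_interior_near lo hi x r : lo < hi -> lo <= x <= hi -> 0 < r ->
  exists y, lo < y < hi /\ Rabs (y - x) < r.
Proof.
  intros Hlh Hx Hr. set (s := Rmin r ((hi - lo) / 2) / 2).
  assert (0 < Rmin r ((hi - lo) / 2)) by (apply Rmin_case; lra).
  assert (Rmin r ((hi - lo) / 2) <= r) by apply Rmin_l.
  assert (Rmin r ((hi - lo) / 2) <= (hi - lo) / 2) by apply Rmin_r.
  destruct (Rlt_or_le x ((lo + hi) / 2)).
  - exists (x + s). unfold s. split; [lra|]. rewrite Rabs_right; lra.
  - exists (x - s). unfold s. split; [lra|]. rewrite Rabs_left; lra.
Qed.

Lemma continuity_2d_pt_eq_on_segment (g k : R -> R -> R) t lo hi x :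
  lo < hi -> lo <= x <= hi ->
  continuity_2d_pt g t x -> continuity_2d_pt k t x ->
  (forall y, lo < y < hi -> g t y = k t y) -> g t x = k t x.
Proof.
  intros Hlh Hx Hg Hk Heq.
  destruct (Req_dec (g t x) (k t x)) as [|Hne]; [easy|exfalso].
  set (eps := Rabs (g t x - k t x) / 2).
  assert (Heps : 0 < eps) by (apply Rdiv_lt_0_compat; [apply Rabs_pos_lt|]; lra).
  destruct (Hg (mkposreal eps Heps)) as [dg Hdg].
  destruct (Hk (mkposreal eps Heps)) as [dk Hdk].
  destruct (segment_interior_near lo hi x (Rmin dg dk) Hlh Hx) as [y [Hy Hyx]].
  { apply Rmin_case; apply cond_pos. }
  assert (Rmin dg dk <= dg) by apply Rmin_l.
  assert (Rmin dg dk <= dk) by apply Rmin_r.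
  assert (Ht : Rabs (t - t) < Rmin dg dk)
    by (rewrite Rminus_diag, Rabs_R0; apply Rmin_case; apply cond_pos).
  specialize (Hdg t y ltac:(lra) ltac:(lra)).
  specialize (Hdk t y ltac:(lra) ltac:(lra)). simpl in Hdg, Hdk.
  rewrite (Heq y Hy) in Hdg.
  assert (Rabs (g t x - k t x) <= Rabs (k t y - g t x) + Rabs (k t y - k t x)).
  { replace (g t x - k t x) with (- (k t y - g t x) + (k t y - k t x)) by ring.
    eapply Rle_trans; [apply Rabs_triang|]. rewrite Rabs_Ropp. lra. }
  unfold eps in *. lra.
Qed.

(* Coquelicot's [Schwarz] needs a full neighbourhood of the point; at an endpoint of the strip
   we pass to the limit from interior points instead. *)
Lemma Schwarz_strip (g : R -> R -> R) t lo hi x delta :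
  0 < delta -> lo < hi -> lo <= x <= hi ->
  (forall u v, Rabs (u - t) < delta -> lo <= v <= hi ->
     ex_derive (fun s => g s v) u /\ ex_derive (fun y => g u y) v /\
     ex_derive (fun s => dx g s v) u /\ ex_derive (fun y => dt g u y) v) ->
  (forall v, lo <= v <= hi ->
     continuity_2d_pt (dt (dx g)) t v /\ continuity_2d_pt (dx (dt g)) t v) ->
  dt (dx g) t x = dx (dt g) t x.
Proof.
  intros Hdelta Hlh Hx Hder Hcont.
  apply (continuity_2d_pt_eq_on_segment _ _ t lo hi x Hlh Hx); try apply Hcont; auto.
  intros y Hy.
  set (r := Rmin delta (Rmin (y - lo) (hi - y))).
  assert (Hr : 0 < r) by (unfold r; repeat apply Rmin_case; lra).
  assert (r <= delta) by apply Rmin_l.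
  assert (r <= Rmin (y - lo) (hi - y)) by apply Rmin_r.
  assert (Rmin (y - lo) (hi - y) <= y - lo) by apply Rmin_l.
  assert (Rmin (y - lo) (hi - y) <= hi - y) by apply Rmin_r.
  apply Schwarz; [| apply Hcont; lra | apply Hcont; lra].
  exists (mkposreal r Hr). intros u v Hu Hv. simpl in Hu, Hv.
  apply Rabs_def2 in Hv.
  destruct (Hder u v ltac:(lra) ltac:(lra)) as [Dt [Dx [Dtx Dxt]]].
  repeat split; assumption.
Qed.

Lemma continuity_2d_pt_pos_near (psi : R -> R -> R) t0 lo hi : lo <= hi ->
  (forall x, lo <= x <= hi -> continuity_2d_pt psi t0 x) ->
  (forall x, lo <= x <= hi -> 0 < psi t0 x) ->
  exists d, 0 < d /\ forall s x, Rabs (s - t0) < d -> lo <= x <= hi -> 0 < psi s x.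
Proof.
  intros Hlh Hc Hp.
  destruct (continuity_ab_min (fun y => psi t0 y) lo hi Hlh) as [xm [Hxm Hxm_in]].
  { intros x Hx. apply continuity_2d_pt_slice, Hc, Hx. }
  set (m := psi t0 xm). assert (Hm : 0 < m) by (apply Hp, Hxm_in).
  destruct (uniform_continuity_2d_1d' psi lo hi t0 Hc (mkposreal m Hm)) as [d Hd].
  exists d. split; [apply cond_pos|]. intros s x Hs Hx.
  apply Rabs_def2 in Hs.
  assert (Hclose : Rabs (psi s x - psi t0 x) < m).
  { apply (Hd x t0 x s Hx); [pose proof (cond_pos d); lra | exact Hx | lra |].
    rewrite Rminus_diag, Rabs_R0. apply cond_pos. }
  apply Rabs_def2 in Hclose. specialize (Hxm x Hx). simpl in *. fold m in Hxm. lra.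
Qed.

Lemma continuity_2d_pt_nonneg_left (psi : R -> R -> R) t x : 0 < t ->
  continuity_2d_pt psi t x -> (forall s, 0 <= s < t -> 0 < psi s x) -> 0 <= psi t x.
Proof.
  intros Ht Hc Hpos. destruct (Rle_or_lt 0 (psi t x)) as [|Hneg]; [easy|exfalso].
  destruct (Hc (mkposreal (- psi t x) ltac:(lra))) as [d Hd].
  set (s := t - Rmin d t / 2).
  assert (0 < Rmin d t) by (apply Rmin_case; [apply cond_pos|lra]).
  assert (Rmin d t <= d) by apply Rmin_l.
  assert (Rmin d t <= t) by apply Rmin_r.
  specialize (Hd s x ltac:(unfold s; rewrite Rabs_left; lra)
                 ltac:(rewrite Rminus_diag, Rabs_R0; apply cond_pos)).
  simpl in Hd. apply Rabs_def2 in Hd.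
  specialize (Hpos s ltac:(unfold s; lra)). lra.
Qed.

Lemma continuity_2d_pt_time_affine (c : R) t x :
  continuity_2d_pt (fun u _ => c * (1 + u)) t x.
Proof.
  apply (continuity_2d_pt_mult (fun _ _ => c) (fun u _ => 1 + u));
    [apply continuity_2d_pt_const|].
  apply (continuity_2d_pt_plus (fun _ _ => 1) (fun u _ => u));
    [apply continuity_2d_pt_const | apply continuity_2d_pt_id1].
Qed.

(** * A parabolic minimum principle *)

Lemma sup_initial_segment (P : R -> Prop) ts : 0 <= ts -> P 0 ->
  exists t1, 0 <= t1 <= ts /\ (forall s, 0 <= s < t1 -> P s) /\
    (forall s, s <= ts -> (forall u, 0 <= u <= s -> P u) -> s <= t1).
Proof.
  intros Hts HP0.
  set (E := fun s => 0 <= s <= ts /\ forall u, 0 <= u <= s -> P u).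
  assert (HE0 : E 0) by (split; [lra | intros u Hu; replace u with 0 by lra; exact HP0]).
  destruct (completeness E) as [t1 [Hub Hlub]];
    [exists ts; intros s [Hs _]; lra | exists 0; exact HE0 |].
  exists t1. split; [split; [apply Hub, HE0 | apply Hlub; intros s [Hs _]; lra]|]. split.
  - intros s Hs.
    destruct (classic (exists s', E s' /\ s < s')) as [[s' [[_ HP] Hss']] | Hno].
    + apply HP. lra.
    + enough (t1 <= s) by lra. apply Hlub. intros z Hz.
      destruct (Rle_or_lt z s) as [|Hsz]; [easy|]. exfalso. apply Hno. now exists z.
  - intros s Hs HP. destruct (Rle_or_lt 0 s) as [Hs0 | Hs0].
    + apply Hub. split; [lra | exact HP].
    + apply Rle_trans with 0; [lra | apply Hub, HE0].
Qed.

Lemma first_touch_positive (T : Rbar) (a : R) (psi : R -> R -> R) : 1 <= a ->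
  (forall t x, flow_dom T a t x -> continuity_2d_pt psi t x) ->
  (forall x, 1 <= x <= a -> 0 < psi 0 x) ->
  (forall t x, 0 < t -> Rbar_lt t T -> 1 <= x <= a -> psi t x = 0 ->
     (forall y, 1 <= y <= a -> 0 <= psi t y) ->
     (forall s, 0 <= s < t -> 0 < psi s x) -> False) ->
  forall t x, flow_dom T a t x -> 0 < psi t x.
Proof.
  intros Ha Hc H0 Hnotouch ts xs [Hts [HtsT Hxs]].
  destruct (Rlt_or_le 0 (psi ts xs)) as [|Hbad]; [easy|exfalso].
  destruct (sup_initial_segment (fun u => forall y, 1 <= y <= a -> 0 < psi u y) ts Hts H0)
    as [t1 [Ht1ts [Hbefore Hsup]]].
  assert (Hcont : forall u y, 0 <= u <= ts -> 1 <= y <= a -> continuity_2d_pt psi u y).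
  { intros u y Hu Hy. apply Hc. repeat split; try lra; try apply Hy.
    eapply Rbar_le_lt_trans; [|exact HtsT]. simpl. lra. }
  assert (Hts_good : ~ (forall u, 0 <= u <= ts -> forall y, 1 <= y <= a -> 0 < psi u y))
    by (intros Hgood; specialize (Hgood ts ltac:(lra) xs Hxs); lra).
  assert (Ht1 : 0 < t1).
  { destruct (continuity_2d_pt_pos_near psi 0 1 a Ha) as [d [Hd Hnear]];
      [intros y Hy; apply Hcont; lra | exact H0 |].
    destruct (Rle_lt_dec ts (d / 2)) as [Hsmall|Hlarge].
    - exfalso. apply Hts_good. intros u Hu y Hy. apply Hnear; [|exact Hy].
      rewrite Rminus_0_r, Rabs_right; lra.
    - enough (d / 2 <= t1) by lra. apply Hsup; [lra|].
      intros u Hu y Hy. apply Hnear; [|exact Hy]. rewrite Rminus_0_r, Rabs_right; lra. }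
  assert (Hnonneg : forall y, 1 <= y <= a -> 0 <= psi t1 y).
  { intros y Hy. apply continuity_2d_pt_nonneg_left; [exact Ht1 | apply Hcont; lra |].
    intros s Hs. apply Hbefore; [exact Hs | exact Hy]. }
  destruct (classic (exists y, 1 <= y <= a /\ psi t1 y = 0)) as [[y [Hy Hzero]] | Hno].
  - apply (Hnotouch t1 y Ht1); try assumption.
    + eapply Rbar_le_lt_trans; [|exact HtsT]. apply Ht1ts.
    + intros s Hs. apply Hbefore; [exact Hs | exact Hy].
  - destruct (continuity_2d_pt_pos_near psi t1 1 a Ha) as [d [Hd Hnear]];
      [intros y Hy; apply Hcont; lra | |].
    { intros y Hy. destruct (Hnonneg y Hy) as [|Hz]; [easy|].
      exfalso. apply Hno. now exists y. }
    assert (Hgood : forall s, t1 <= s < t1 + d ->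
              forall u, 0 <= u <= s -> forall y, 1 <= y <= a -> 0 < psi u y).
    { intros s Hs u Hu y Hy. destruct (Rlt_or_le u t1).
      - apply Hbefore; [lra | exact Hy].
      - apply Hnear; [rewrite Rabs_right; lra | exact Hy]. }
    destruct (Rle_lt_dec ts (t1 + d / 2)) as [Hsmall|Hlarge].
    + apply Hts_good, Hgood. lra.
    + enough (t1 + d / 2 <= t1) by lra. apply Hsup; [lra|]. apply Hgood. lra.
Qed.

Lemma min_principle (T : Rbar) (a : R) (phi : R -> R -> R) : 1 <= a ->
  (forall t x, flow_dom T a t x -> continuity_2d_pt phi t x) ->
  (forall x, 1 <= x <= a -> 0 <= phi 0 x) ->
  (forall eps t x, 0 < eps -> 0 < t -> Rbar_lt t T -> 1 <= x <= a ->
     phi t x = - eps * (1 + t) ->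
     (forall y, 1 <= y <= a -> phi t x <= phi t y) ->
     (forall s, 0 <= s < t -> - eps * (1 + s) < phi s x) -> False) ->
  forall t x, flow_dom T a t x -> 0 <= phi t x.
Proof.
  intros Ha Hc H0 Hnotouch.
  assert (Hpos : forall eps, 0 < eps ->
            forall t x, flow_dom T a t x -> 0 < phi t x + eps * (1 + t)).
  { intros eps Heps.
    apply (first_touch_positive T a (fun t x => phi t x + eps * (1 + t)) Ha).
    - intros t x Hdom.
      apply (continuity_2d_pt_plus phi (fun u _ => eps * (1 + u)));
        [apply Hc, Hdom | apply continuity_2d_pt_time_affine].
    - intros x Hx. specialize (H0 x Hx). lra.
    - intros t x Ht HtT Hx Htouch Habove Hbefore.
      apply (Hnotouch eps t x Heps Ht HtT Hx); [lra | |].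
      + intros y Hy. specialize (Habove y Hy). lra.
      + intros s Hs. specialize (Hbefore s Hs). lra. }
  intros t x Hdom. assert (Ht : 0 <= t) by apply Hdom.
  apply Rle_plus_epsilon. intros e He.
  specialize (Hpos (e / (1 + t)) ltac:(apply Rdiv_lt_0_compat; lra) t x Hdom).
  replace (e / (1 + t) * (1 + t)) with e in Hpos by (field; lra).
  lra.
Qed.

Definition angle_x (n : nat) (f : R -> R -> R) (t x : R) : R :=
  dx (dx f) t x / (1 + (dx f t x) ^ 2)
  + (INR n - 1) * (x * dx f t x - f t x) / (x ^ 2 + (f t x) ^ 2).

Lemma mcf_rhs_angle_x n U f t x : mcf_rhs n U f t x = U x * angle_x n f t x.
Proof. reflexivity. Qed.

Lemma is_derive_angle_x n f t x : 0 < x -> ex_derive (fun y => f t y) x ->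
  ex_derive (fun y => dx f t y) x ->
  is_derive (fun y => angle n f t y) x (angle_x n f t x).
Proof.
  intros Hx H1 H2. unfold angle, angle_x. auto_derive.
  - repeat split; auto. lra.
  - change (Derive (fun y => f t y) x) with (dx f t x).
    change (Derive (fun y => dx f t y) x) with (dx (dx f) t x).
    set (F := f t x). set (F1 := dx f t x).
    assert (x * x + F * F <> 0) by nra.
    assert (1 + F1 * F1 <> 0) by nra.
    field. repeat split; try lra; nra.
Qed.

Lemma is_derive_angle_t n f t x : 0 < x -> ex_derive (fun s => f s x) t ->
  ex_derive (fun s => dx f s x) t ->
  is_derive (fun s => angle n f s x) t
    ((INR n - 1) * (dt f t x / x / (1 + (f t x / x) ^ 2))
     + dt (dx f) t x / (1 + (dx f t x) ^ 2)).
Proof.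
  intros Hx H1 H2. unfold angle. auto_derive.
  - repeat split; auto.
  - change (Derive (fun s => f s x) t) with (dt f t x).
    change (Derive (fun s => dx f s x) t) with (dt (dx f) t x).
    set (F := f t x). set (F1 := dx f t x).
    assert (1 + F1 * F1 <> 0) by nra.
    assert (x * x + F * F <> 0) by nra.
    field. repeat split; try lra; nra.
Qed.

Lemma ex_derive_angle_x n f t x : 0 < x -> ex_derive (fun y => f t y) x ->
  ex_derive (fun y => dx f t y) x -> ex_derive (fun y => dx (dx f) t y) x ->
  ex_derive (fun y => angle_x n f t y) x.
Proof.
  intros Hx H1 H2 H3. unfold angle_x. auto_derive.
  repeat split; auto.
  - nra.
  - assert (0 < x * x) by nra. nra.
Qed.

Lemma continuity_2d_pt_angle n f t x : 0 < x ->
  continuity_2d_pt f t x -> continuity_2d_pt (dx f) t x ->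
  continuity_2d_pt (angle n f) t x.
Proof.
  intros Hx Hf Hf'. unfold angle.
  assert (Hatan : forall z, continuity_pt atan z)
    by (intros z; apply derivable_continuous_pt, derivable_pt_atan).
  apply (continuity_2d_pt_plus (fun u v => (INR n - 1) * atan (f u v / v))
                               (fun u v => atan (dx f u v))).
  - apply (continuity_2d_pt_mult (fun _ _ => INR n - 1) (fun u v => atan (f u v / v)));
      [apply continuity_2d_pt_const|].
    apply (continuity_1d_2d_pt_comp atan (fun u v => f u v / v)); [apply Hatan|].
    apply (continuity_2d_pt_mult f (fun _ v => / v)); [exact Hf|].
    apply (continuity_2d_pt_inv (fun _ v => v)); [apply continuity_2d_pt_id2 | lra].
  - apply (continuity_1d_2d_pt_comp atan (dx f)); [apply Hatan | exact Hf'].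
Qed.

(** * The flow *)

Lemma Rbar_lt_right_room (t : R) (T : Rbar) : Rbar_lt t T ->
  exists d, 0 < d /\ forall u, u < t + d -> Rbar_lt u T.
Proof.
  destruct T as [r | |]; simpl; intros H.
  - exists (r - t). split; [lra|]. intros u Hu. simpl. lra.
  - exists 1. split; [lra|]. easy.
  - contradiction.
Qed.

Section Flow.

Variables (n : nat) (a : R) (U : R -> R) (T : Rbar) (f : R -> R -> R).
Hypothesis Ha : 1 < a.
Hypothesis HU_pos : forall x, 1 < x < a -> 0 < U x.
Hypothesis Hf_smooth : smooth_on2 (flow_dom T a) f.
Hypothesis Hf_flow : forall t x, flow_dom T a t x -> dt f t x = mcf_rhs n U f t x.

Lemma flow_ex_derive_x l t x : flow_dom T a t x -> ex_derive (fun y => iterD l f t y) x.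
Proof. intros H. exact (proj1 (Hf_smooth l t x H)). Qed.

Lemma flow_ex_derive_t l t x : flow_dom T a t x -> ex_derive (fun s => iterD l f s x) t.
Proof. intros H. exact (proj1 (proj2 (Hf_smooth l t x H))). Qed.

Lemma flow_continuity l t x : flow_dom T a t x -> continuity_2d_pt (iterD l f) t x.
Proof. intros H. exact (proj2 (proj2 (Hf_smooth l t x H))). Qed.

Lemma flow_dt_dx_comm t x : 0 < t -> Rbar_lt t T -> 1 <= x <= a ->
  dt (dx f) t x = dx (dt f) t x.
Proof.
  intros Ht HtT Hx.
  destruct (Rbar_lt_right_room t T HtT) as [d [Hd Hroom]].
  assert (0 < Rmin t d) by (apply Rmin_case; lra).
  assert (Rmin t d <= t) by apply Rmin_l.
  assert (Rmin t d <= d) by apply Rmin_r.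
  apply (Schwarz_strip f t 1 a x (Rmin t d)); try assumption.
  - intros u v Hu Hv. apply Rabs_def2 in Hu.
    assert (Hdom : flow_dom T a u v) by (repeat split; try lra; try apply Hroom; lra).
    exact (conj (flow_ex_derive_t nil u v Hdom)
           (conj (flow_ex_derive_x nil u v Hdom)
           (conj (flow_ex_derive_t (true :: nil) u v Hdom)
                 (flow_ex_derive_x (false :: nil) u v Hdom)))).
  - intros v Hv. assert (Hdom : flow_dom T a t v) by (repeat split; lra || easy).
    exact (conj (flow_continuity (false :: true :: nil) t v Hdom)
                (flow_continuity (true :: false :: nil) t v Hdom)).
Qed.

Lemma flow_dt_nonpos_at_max t x : (1 <= n)%nat -> 0 <= t -> Rbar_lt t T -> 1 < x < a ->
  0 <= f t x -> (forall y, 1 <= y <= a -> f t y <= f t x) -> dt f t x <= 0.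
Proof.
  intros Hn Ht HtT Hx Hfx Hmax.
  assert (Hdom : forall y, 1 <= y <= a -> flow_dom T a t y)
    by (intros y Hy; repeat split; lra || easy).
  set (r := Rmin (x - 1) (a - x)).
  assert (Hr : 0 < r) by (unfold r; apply Rmin_case; lra).
  assert (r <= x - 1) by apply Rmin_l.
  assert (r <= a - x) by apply Rmin_r.
  assert (Hin : forall y, Rabs (y - x) < r -> 1 <= y <= a)
    by (intros y Hy; apply Rabs_def2 in Hy; lra).
  assert (Hmin : forall y, Rabs (y - x) < r -> - f t x <= - f t y)
    by (intros y Hy; specialize (Hmax y (Hin y Hy)); lra).
  assert (D1 : forall y, Rabs (y - x) < r -> is_derive (fun z => - f t z) y (- dx f t y)).
  { intros y Hy. apply (is_derive_opp (fun z => f t z)), Derive_correct.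
    exact (flow_ex_derive_x nil t y (Hdom y (Hin y Hy))). }
  assert (D2 : is_derive (fun z => - dx f t z) x (- dx (dx f) t x)).
  { apply (is_derive_opp (fun z => dx f t z)), Derive_correct.
    exact (flow_ex_derive_x (true :: nil) t x (Hdom x ltac:(lra))). }
  assert (Hcrit : - dx f t x = 0).
  { apply (is_derive_local_min_eq0 (fun z => - f t z) x _ r Hr); [apply D1 | exact Hmin].
    rewrite Rminus_diag, Rabs_R0. exact Hr. }
  assert (Hconc : 0 <= - dx (dx f) t x)
    by exact (is_derive2_local_min_ge0 (fun z => - f t z) (fun z => - dx f t z) x _ r Hr D1 D2 Hmin).
  rewrite Hf_flow, mcf_rhs_angle_x by (apply Hdom; lra). unfold angle_x.
  replace (dx f t x) with 0 by lra.
  apply le_INR in Hn. simpl in Hn.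
  assert (0 < x ^ 2 + f t x ^ 2) by nra.
  assert ((INR n - 1) * (x * 0 - f t x) / (x ^ 2 + f t x ^ 2) <= 0)
    by (apply Rmult_le_0_r; [nra | left; apply Rinv_0_lt_compat; lra]).
  specialize (HU_pos x Hx). replace (1 + 0 ^ 2) with 1 by ring. nra.
Qed.

Lemma f_no_first_touch M eps t x : (1 <= n)%nat -> 0 <= M -> 0 < eps ->
  0 < t -> Rbar_lt t T -> 1 <= x <= a -> f t 1 <= M -> f t a <= M ->
  f t x = M + eps * (1 + t) ->
  (forall y, 1 <= y <= a -> f t y <= f t x) ->
  (forall s, 0 <= s < t -> f s x < M + eps * (1 + s)) -> False.
Proof.
  intros Hn HM Heps Ht HtT Hx Hf1 Hfa Htouch Hmax Hbefore.
  assert (HfM : M < f t x) by nra.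
  assert (Hx' : 1 < x < a) by (destruct Hx as [[| <-] [| ->]]; split; lra).
  assert (Hdt_nonpos : dt f t x <= 0)
    by (apply flow_dt_nonpos_at_max; try assumption; lra).
  assert (Hdt_ge : eps - dt f t x <= 0).
  { assert (Ex : ex_derive (fun s => f s x) t)
      by (apply (flow_ex_derive_t nil); repeat split; lra || easy).
    apply (is_derive_left_min_le0 (fun s => eps * s - f s x) t _ t Ht).
    - auto_derive; [exact Ex | unfold dt; ring].
    - intros s Hs. specialize (Hbefore s ltac:(lra)). lra. }
  lra.
Qed.
Lemma flow_upper_bound (p q M : R) : (1 <= n)%nat ->
  (forall t, 0 <= t -> Rbar_lt t T -> f t 1 = q /\ f t a = p) ->
  0 <= M -> p <= M -> q <= M -> (forall x, 1 <= x <= a -> f 0 x <= M) ->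
  forall t x, flow_dom T a t x -> f t x <= M.
Proof.
  intros Hn Hbd HM HpM HqM H0 t x Hdom.
  enough (0 <= M - f t x) by lra. revert t x Hdom.
  apply (min_principle T a (fun t x => M - f t x)); [lra | | |].
  - intros t x Hdom.
    apply (continuity_2d_pt_minus (fun _ _ => M) f);
      [apply continuity_2d_pt_const | exact (flow_continuity nil t x Hdom)].
  - intros x Hx. specialize (H0 x Hx). lra.
  - intros eps t x Heps Ht HtT Hx Htouch Hmin Hbefore.
    destruct (Hbd t ltac:(lra) HtT) as [Hq Hp].
    apply (f_no_first_touch M eps t x); try lra; try assumption.
    + intros y Hy. specialize (Hmin y Hy). lra.
    + intros s Hs. specialize (Hbefore s Hs). lra.
Qed.

Lemma flow_dt_dx_eq t x U' E' : 0 < t -> Rbar_lt t T -> 1 <= x <= a ->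
  is_derive U x U' -> is_derive (fun y => angle_x n f t y) x E' ->
  dt (dx f) t x = U' * angle_x n f t x + U x * E'.
Proof.
  intros Ht HtT Hx DU DE.
  assert (Hdom : forall y, 1 <= y <= a -> flow_dom T a t y)
    by (intros y Hy; repeat split; lra || easy).
  rewrite flow_dt_dx_comm by assumption.
  apply (is_derive_eq_on_interval (fun y => dt f t y) (fun y => U y * angle_x n f t y) 1 a x);
    try assumption.
  - intros y Hy. rewrite Hf_flow by apply Hdom, Hy. apply mcf_rhs_angle_x.
  - apply Derive_correct. exact (flow_ex_derive_x (false :: nil) t x (Hdom x Hx)).
  - exact (is_derive_mult U _ x U' E' DU DE Rmult_comm).
Qed.

Lemma angle_no_first_touch (c eps t x : R) :
  smooth_on1 1 a U -> U 1 = 0 -> U a = 0 ->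
  0 < eps -> 0 < t -> Rbar_lt t T -> 1 <= x <= a ->
  angle n f t x = c - eps * (1 + t) ->
  (forall y, 1 <= y <= a -> angle n f t x <= angle n f t y) ->
  (forall s, 0 <= s < t -> c - eps * (1 + s) < angle n f s x) -> False.
Proof.
  intros HU HU1 HUa Heps Ht HtT Hx Htouch Hmin Hbefore.
  assert (Hdom : forall y, 1 <= y <= a -> flow_dom T a t y)
    by (intros y Hy; repeat split; lra || easy).
  set (U' := Derive U x).
  set (E' := Derive (fun y => angle_x n f t y) x).
  assert (DU : is_derive U x U') by exact (Derive_correct _ _ (HU 1%nat x Hx)).
  assert (DE : is_derive (fun y => angle_x n f t y) x E').
  { apply Derive_correct, ex_derive_angle_x; [lra | ..];
      [exact (flow_ex_derive_x nil t x (Hdom x Hx))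
      | exact (flow_ex_derive_x (true :: nil) t x (Hdom x Hx))
      | exact (flow_ex_derive_x (true :: true :: nil) t x (Hdom x Hx))]. }
  destruct (weighted_derivative_at_min U (fun y => angle n f t y) (angle_x n f t)
              1 a x U' E' Ha Hx HU_pos HU1 HUa) as [Hstill Hgrow]; try assumption.
  { intros y Hy. apply is_derive_angle_x; [lra | ..];
      [exact (flow_ex_derive_x nil t y (Hdom y Hy))
      | exact (flow_ex_derive_x (true :: nil) t y (Hdom y Hy))]. }
  assert (Hdt : dt f t x = 0)
    by (rewrite Hf_flow, mcf_rhs_angle_x by apply Hdom, Hx; exact Hstill).
  assert (Hdtdx : dt (dx f) t x = U' * angle_x n f t x + U x * E')
    by exact (flow_dt_dx_eq t x U' E' Ht HtT Hx DU DE).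
  assert (Hang_t : is_derive (fun s => angle n f s x + eps * s) t
           ((INR n - 1) * (dt f t x / x / (1 + (f t x / x) ^ 2))
            + dt (dx f) t x / (1 + (dx f t x) ^ 2) + eps)).
  { apply (is_derive_plus (fun s => angle n f s x) (fun s => eps * s)).
    - apply is_derive_angle_t; [lra | ..];
        [exact (flow_ex_derive_t nil t x (Hdom x Hx))
        | exact (flow_ex_derive_t (true :: nil) t x (Hdom x Hx))].
    - auto_derive; [easy | ring]. }
  assert (Hle : (INR n - 1) * (dt f t x / x / (1 + (f t x / x) ^ 2))
                + dt (dx f) t x / (1 + (dx f t x) ^ 2) + eps <= 0).
  { apply (is_derive_left_min_le0 _ t _ t Ht Hang_t).
    intros s Hs. specialize (Hbefore s ltac:(lra)). lra. }
  rewrite Hdt, Hdtdx in Hle.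
  assert (0 <= (U' * angle_x n f t x + U x * E') / (1 + dx f t x ^ 2))
    by (apply Rdiv_le_0_compat; [exact Hgrow | nra]).
  unfold Rdiv at 1 2 in Hle. rewrite !Rmult_0_l, Rmult_0_r in Hle. lra.
Qed.

Lemma angle_lower_bound (c : R) : smooth_on1 1 a U -> U 1 = 0 -> U a = 0 ->
  (forall x, 1 <= x <= a -> c <= angle n f 0 x) ->
  forall t x, flow_dom T a t x -> c <= angle n f t x.
Proof.
  intros HU HU1 HUa H0 t x Hdom.
  enough (0 <= angle n f t x - c) by lra. revert t x Hdom.
  apply (min_principle T a (fun t x => angle n f t x - c)); [lra | | |].
  - intros t x Hdom.
    apply (continuity_2d_pt_minus (angle n f) (fun _ _ => c));
      [| apply continuity_2d_pt_const].
    apply continuity_2d_pt_angle; [destruct Hdom as [_ [_ Hx]]; lra | ..];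
      [exact (flow_continuity nil t x Hdom) | exact (flow_continuity (true :: nil) t x Hdom)].
  - intros x Hx. specialize (H0 x Hx). lra.
  - intros eps t x Heps Ht HtT Hx Htouch Hmin Hbefore.
    apply (angle_no_first_touch c eps t x); try assumption.
    + lra.
    + intros y Hy. specialize (Hmin y Hy). lra.
    + intros s Hs. specialize (Hbefore s Hs). lra.
Qed.

End Flow.

(** * The gradient bound *)

Lemma continuity_upper_bound (g : R -> R) lo hi c : lo <= hi ->
  (forall x, lo <= x <= hi -> continuity_pt g x) ->
  exists M, c <= M /\ forall x, lo <= x <= hi -> g x <= M.
Proof.
  intros Hlh Hc. destruct (continuity_ab_maj g lo hi Hlh Hc) as [xM [HxM _]].
  exists (Rmax c (g xM)). split; [apply Rmax_l|].
  intros x Hx. eapply Rle_trans; [apply HxM, Hx | apply Rmax_r].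
Qed.

Lemma atan_lower_bound (N M : R) : 0 < N ->
  exists C, forall y z, y <= M ->
    (N - 1) * (PI / 2) <= N * atan y + atan z -> - C < z.
Proof.
  intros HN.
  destruct (atan_bound M) as [HMlo HMhi].
  set (th := Rmin (N * (PI / 2 - atan M) - PI / 2) 0).
  assert (Hth : - (PI / 2) < th <= 0).
  { assert (0 < N * (PI / 2 - atan M)) by (apply Rmult_lt_0_compat; lra).
    unfold th. split; [apply Rmin_case; lra | apply Rmin_r]. }
  exists (1 - tan th). intros y z Hy Hangle.
  assert (Hatan_y : atan y <= atan M)
    by (destruct Hy as [Hy | ->]; [left; apply atan_increasing, Hy | lra]).
  assert (Hatan_z : th <= atan z).
  { assert (th <= N * (PI / 2 - atan M) - PI / 2) by apply Rmin_l. nra. }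
  destruct (Rle_or_lt (tan th) z) as [|Hz]; [lra|].
  apply atan_increasing in Hz. rewrite atan_tan in Hz by lra. lra.
Qed.

Theorem lemma4p4
  (n : nat) (a p q : R) (U : R -> R) (T : Rbar) (f : R -> R -> R) :
  (3 <= n)%nat ->
  1 < a ->
  (* u'' : smooth on [1,a], positive on (1,a), vanishing at the endpoints *)
  smooth_on1 1 a U ->
  (forall x, 1 < x < a -> 0 < U x) ->
  U 1 = 0 -> U a = 0 ->
  (* the flow exists (smoothly) on [0,T), T > 0 possibly infinite *)
  Rbar_lt (Finite 0) T ->
  smooth_on2 (flow_dom T a) f ->
  (forall t x, flow_dom T a t x -> dt f t x = mcf_rhs n U f t x) ->
  (forall t, 0 <= t -> Rbar_lt (Finite t) T -> f t 1 = q /\ f t a = p) ->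
  (* supercritical phase for f_0 *)
  (forall x, 1 <= x <= a -> angle n f 0 x > (INR n - 2) * (PI / 2)) ->
  exists C : R, forall t x, flow_dom T a t x -> dx f t x > - C.
Proof.
  intros Hn Ha HU HUpos HU1 HUa HT Hs Hflow Hbd Hphase.
  assert (Hf0_cont : forall x, 1 <= x <= a -> continuity_pt (f 0) x).
  { intros x Hx. apply ex_derive_continuity_pt, (flow_ex_derive_x a T f Hs nil).
    repeat split; lra || easy. }
  destruct (continuity_upper_bound (f 0) 1 a (Rmax 0 (Rmax p q)) ltac:(lra) Hf0_cont)
    as [M [HM Hf0]].
  assert (HMpq : 0 <= M /\ p <= M /\ q <= M)
    by (pose proof (Rmax_l 0 (Rmax p q)); pose proof (Rmax_r 0 (Rmax p q));
        pose proof (Rmax_l p q); pose proof (Rmax_r p q); lra).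
  assert (Hf_le : forall t x, flow_dom T a t x -> f t x <= M)
    by (apply (flow_upper_bound n a U T f) with p q; try tauto; lia).
  assert (Hangle : forall t x, flow_dom T a t x -> (INR n - 2) * (PI / 2) <= angle n f t x).
  { apply (angle_lower_bound n a U T f); try assumption.
    intros x Hx. left. apply Hphase, Hx. }
  assert (Hn1 : 2 <= INR n) by (apply (le_INR 2); lia).
  destruct (atan_lower_bound (INR n - 1) M) as [C HC]; [lra|].
  exists C. intros t x Hdom.
  assert (Hx : 1 <= x <= a) by apply Hdom.
  apply (HC (f t x / x)).
  - apply Rle_div_l; [lra|]. specialize (Hf_le t x Hdom). nra.
  - replace ((INR n - 1 - 1) * (PI / 2)) with ((INR n - 2) * (PI / 2)) by ring.
    exact (Hangle t x Hdom).
Qed.
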